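(* Let $\Omega_3$ be a set with $3$ elements and $v_0:2^{\Omega_3}\to[0,\infty)$ non-decreasing with $v_0(\emptyset)=0$. Define $v_{n+1}(A)=\sup_{\mathcal I\in\Sigma}\mu_{v_n,\mathcal I}(A)$, $A\subset\Omega_3$, $n\ge0$. Then $v_1=v_2=\cdots$ and $v_1$ is submodular.
   Context: $\Sigma$ denotes the set of all chains $\mathcal I\subset2^{\Omega_3}$ (totally ordered by inclusion) containing $\emptyset$ and $\Omega_3$ and generating $2^{\Omega_3}$ as a $\sigma$-algebra (equivalently, maximal chains of subsets). For non-decreasing $v$ and $\mathcal I\in\Sigma$, $\mu_{v,\mathcal I}$ is the unique measure on $2^{\Omega_3}$ with $\mu_{v,\mathcal I}(I)=v(I)$ for $I\in\mathcal I$. Non-decreasing means $v(A)\le v(B)$ for $A\subset B$; submodular means $v(A)+v(B)\ge v(A\cup B)+v(A\cap B)$. *)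

From mathcomp Require Import all_boot all_order all_algebra.
From mathcomp Require Import reals.
Set Implicit Arguments. Unset Strict Implicit. Unset Printing Implicit Defensive.
Import Order.TTheory GRing.Theory Num.Theory.
Local Open Scope ring_scope.

Section Defs.
Variables (R : realType) (T : finType).

Definition is_chain (C : {set {set T}}) : Prop :=
  forall A B : {set T}, A \in C -> B \in C -> (A \subset B) || (B \subset A).

(* sigma-algebra of subsets of the finite set T (countable unions = finite unions) *)
Definition is_sigma_algebra (F : {set {set T}}) : Prop :=
  [/\ set0 \in F, (forall A, A \in F -> ~: A \in F)
    & (forall A B : {set T}, A \in F -> B \in F -> A :|: B \in F)].

Definition generates_powerset (C : {set {set T}}) : Prop :=
  forall F, is_sigma_algebra F -> C \subset F -> F = setT.

Definition in_Sigma (C : {set {set T}}) : Prop :=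
  [/\ is_chain C, set0 \in C, setT \in C & generates_powerset C].

Definition is_measure (mu : {set T} -> R) : Prop :=
  [/\ mu set0 = 0, (forall A, 0 <= mu A)
    & (forall A B : {set T}, [disjoint A & B] -> mu (A :|: B) = mu A + mu B)].

Definition is_mu_of (v : {set T} -> R) (C : {set {set T}}) (mu : {set T} -> R) : Prop :=
  is_measure mu /\ (forall I, I \in C -> mu I = v I).

Definition nondecreasing_setfun (v : {set T} -> R) : Prop :=
  forall A B : {set T}, A \subset B -> v A <= v B.

Definition submodular (v : {set T} -> R) : Prop :=
  forall A B : {set T}, v (A :|: B) + v (A :&: B) <= v A + v B.

Definition next_v (v : {set T} -> R) : {set T} -> R :=
  fun A => sup (fun x : R => exists C mu, [/\ in_Sigma C, is_mu_of v C mu & x = mu A]).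

End Defs.

(* A maximal chain is the set of initial segments P_k of a ranking of the
   points, and mu_{v,I} puts mass v(P_{k+1}) - v(P_k) on the point of rank k;
   since every set is such an initial segment, v <= v_1 <= v(Omega).  Being a
   supremum of measures of common total mass v(Omega), v_1 is subadditive on
   disjoint pairs and satisfies v_1(A n B) + v(Omega) <= v_1(A) + v_1(B) when
   A u B = Omega; on three points every pair of sets is nested, disjoint or
   covering, so v_1 is submodular.  Conversely, if w is submodular then
   mu_{w,I} <= w, by induction along any chain that adds one point at a time,
   and on three points every chain generating the power set does so.  Hence
   v_2 = v_1, and all later iterates agree. *)

From mathcomp Require Import all_boot all_order all_algebra.
From mathcomp Require Import boolp reals lra zify.
Import Order.TTheory GRing.Theory Num.Theory.
Set Implicit Arguments. Unset Strict Implicit. Unset Printing Implicit Defensive.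
Local Open Scope ring_scope.

Section ChainMeasures.
Variables (R : realType) (T : finType).

Lemma disjoint_setD (A B : {set T}) : [disjoint A & B :\: A].
Proof. by rewrite disjoint_sym; apply/setDidPl; rewrite setDDl setUid. Qed.

Section Measure.
Variable mu : {set T} -> R.
Hypothesis mu_measure : is_measure mu.

Lemma measureUI (A B : {set T}) : mu (A :|: B) + mu (A :&: B) = mu A + mu B.
Proof.
have [_ _ mu_add] := mu_measure.
have UE : A :|: B = A :|: (B :\: A).
  by apply/setP => x; rewrite !inE; case: (x \in A).
have BE : B = (A :&: B) :|: (B :\: A) by rewrite setIC setID.
rewrite UE mu_add ?disjoint_setD // [in mu B]BE mu_add; first lra.
exact: disjointWl (subsetIl A B) (disjoint_setD A B).
Qed.

Lemma le_measure (A B : {set T}) : A \subset B -> mu A <= mu B.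
Proof.
move=> AB; have [_ mu_ge0 mu_add] := mu_measure.
by rewrite -(setID B A) (setIidPr AB) mu_add ?disjoint_setD // lerDl.
Qed.
End Measure.

Definition unit_step (P Q : {set T}) := (P \subset Q) && (#|Q :\: P| <= 1)%N.

Lemma card_le1_subset_or_disjoint (D A : {set T}) :
  (#|D| <= 1)%N -> D \subset A \/ [disjoint D & A].
Proof.
move=> /card_le1_eqP D_le1; have [|/subsetPn[x xD xNA]] := boolP (D \subset A).
  by left.
right; rewrite disjoint_sym disjoints_subset; apply/subsetP => y yA.
by rewrite inE; apply: contraNN xNA => yD; rewrite -(D_le1 x y xD yD).
Qed.

Section SubmodularBound.
Variables (w mu : {set T} -> R).
Hypotheses (w_sub : submodular w) (mu_measure : is_measure mu).

Lemma measure_le_submodular_step (A P Q : {set T}) : unit_step P Q ->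
  mu P = w P -> mu Q = w Q -> mu (A :&: P) <= w (A :&: P) -> mu (A :&: Q) <= w (A :&: Q).
Proof.
move=> /andP[PQ QP_le1] muP muQ leP.
have [QPA|QPA] := card_le1_subset_or_disjoint A QP_le1; last first.
  suff -> : A :&: Q = A :&: P by [].
  apply/setP => x; rewrite !inE; case xP: (x \in P); first by rewrite (subsetP PQ).
  by rewrite andbF; apply/andP => -[xA xQ]; move: (disjointFl QPA xA); rewrite !inE xP xQ.
(* Otherwise (A :&: Q) :|: P = Q, and submodularity of w at (A :&: Q, P)
   bounds the increment of the modular mu along P \subset Q. *)
have AQP : A :&: Q :|: P = Q.
  apply/setP => x; rewrite !inE; case xP: (x \in P); first by rewrite orbT (subsetP PQ).
  by rewrite orbF andb_idl // => xQ; apply: (subsetP QPA); rewrite !inE xP xQ.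
have AQP' : A :&: Q :&: P = A :&: P by rewrite -setIA (setIidPr PQ).
have := measureUI mu_measure (A :&: Q) P; have := w_sub (A :&: Q) P.
rewrite AQP AQP' muP muQ; lra.
Qed.

Lemma measure_le_submodular_path (A P : {set T}) (s : seq {set T}) :
  path unit_step P s -> {in P :: s, forall Q, mu Q = w Q} ->
  mu (A :&: P) <= w (A :&: P) -> mu (A :&: last P s) <= w (A :&: last P s).
Proof.
elim: s P => [//|Q s IH] P /= /andP[PQ Qs] agree leP.
apply: IH => // [X Xs|]; first by apply: agree; rewrite inE Xs orbT.
by apply: measure_le_submodular_step PQ _ _ leP; apply: agree; rewrite !inE eqxx ?orbT.
Qed.

Lemma measure_le_submodular_chain (A : {set T}) (s : seq {set T}) :
  w set0 = 0 -> path unit_step set0 s -> last set0 s = setT ->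
  {in s, forall Q, mu Q = w Q} -> mu A <= w A.
Proof.
move=> w0 s_path s_last agree; have [mu0 _ _] := mu_measure.
rewrite -[A]setIT -s_last; apply: measure_le_submodular_path => //.
  by move=> Q; rewrite inE => /predU1P[->|/agree//]; rewrite mu0 w0.
by rewrite setI0 mu0 w0.
Qed.

End SubmodularBound.

Section RankChain.
Variable r : T -> nat.

Definition rank_prefix (k : nat) : {set T} := [set x | r x < k]%N.

Definition rank_chain : {set {set T}} := [set rank_prefix k | k : 'I_#|T|.+1].

Definition rank_measure (v : {set T} -> R) (B : {set T}) : R :=
  \sum_(x in B) (v (rank_prefix (r x).+1) - v (rank_prefix (r x))).

Lemma rank_prefix0 : rank_prefix 0 = set0.
Proof. by apply/setP => x; rewrite !inE. Qed.

Lemma subset_rank_prefix m n : (m <= n)%N -> rank_prefix m \subset rank_prefix n.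
Proof. by move=> mn; apply/subsetP => x; rewrite !inE => /leq_trans; apply. Qed.

Lemma rank_prefixS k : rank_prefix k.+1 = rank_prefix k :|: [set x | r x == k].
Proof. by apply/setP => x; rewrite !inE ltnS leq_eqVlt orbC. Qed.

Hypothesis r_inj : injective r.

Lemma rank_prefix_rankS x : rank_prefix (r x).+1 = x |: rank_prefix (r x).
Proof.
rewrite rank_prefixS setUC; congr (_ :|: _).
by apply/setP => y; rewrite !inE (inj_eq r_inj).
Qed.

Lemma rank_notin_prefix x : x \notin rank_prefix (r x).
Proof. by rewrite inE ltnn. Qed.

Lemma rank_measure_is_measure v : nondecreasing_setfun v -> is_measure (rank_measure v).
Proof.
move=> v_mono; split=> [|B|A B AB]; rewrite /rank_measure.
- by rewrite big_set0.
- by apply: sumr_ge0 => x _; rewrite subr_ge0 v_mono ?subset_rank_prefix.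
- by rewrite -bigU //; apply: eq_bigl => x; rewrite !inE.
Qed.

Lemma rank_measure_prefix v k :
  v set0 = 0 -> rank_measure v (rank_prefix k) = v (rank_prefix k).
Proof.
move=> v0; elim: k => [|k IH]; first by rewrite rank_prefix0 /rank_measure big_set0 v0.
have [x /eqP rx_k|no_rank_k] := pickP (fun x => r x == k).
  subst k; rewrite rank_prefix_rankS /rank_measure big_setU1 ?rank_notin_prefix //=.
  by rewrite -/(rank_measure v _) IH -rank_prefix_rankS subrK.
rewrite rank_prefixS (_ : [set x | r x == k] = set0) ?setU0 //.
by apply/setP => x; rewrite !inE no_rank_k.
Qed.

Hypothesis r_lt : forall x, (r x < #|T|)%N.

Lemma rank_chain_in_Sigma : in_Sigma rank_chain.
Proof.
have prefix_in k : (k <= #|T|)%N -> rank_prefix k \in rank_chain.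
  by rewrite -ltnS => k_lt; apply/imsetP; exists (Ordinal k_lt).
split.
- move=> _ _ /imsetP[m _ ->] /imsetP[n _ ->].
  by case: (leqP m n) => [/subset_rank_prefix->|/ltnW/subset_rank_prefix->]; rewrite ?orbT.
- by rewrite -rank_prefix0 prefix_in.
- suff <- : rank_prefix #|T| = setT by rewrite prefix_in.
  by apply/setP => x; rewrite !inE r_lt.
move=> F [F0 FC FU] chainF; apply/setP => B; rewrite inE.
have FD X Y : X \in F -> Y \in F -> X :\: Y \in F.
  by move=> XF YF; rewrite setDE -[X]setCK -setCU FC // FU // FC.
have F1 x : [set x] \in F.
  have -> : [set x] = rank_prefix (r x).+1 :\: rank_prefix (r x).
    rewrite rank_prefix_rankS setDUl setDv setU0; apply/esym/setDidPl.
    by rewrite disjoints1 rank_notin_prefix.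
  by rewrite FD ?(subsetP chainF) ?prefix_in ?(ltnW (r_lt x)) ?r_lt.
have -> : B = \bigcup_(x in B) [set x].
  apply/setP => y; apply/idP/bigcupP => [yB|[x xB]]; first by exists y; rewrite ?set11.
  by rewrite inE => /eqP->.
exact: (big_ind (fun X => X \in F)).
Qed.

Lemma rank_measure_is_mu_of v : nondecreasing_setfun v -> v set0 = 0 ->
  is_mu_of v rank_chain (rank_measure v).
Proof.
move=> v_mono v0; split; first exact: rank_measure_is_measure.
by move=> _ /imsetP[k _ ->]; apply: rank_measure_prefix.
Qed.

End RankChain.

Lemma exists_rank_prefix (A : {set T}) : exists r : T -> nat,
  [/\ injective r, forall x, (r x < #|T|)%N & A = rank_prefix r #|A|].
Proof.
pose s := enum A ++ enum (~: A).
have s_all x : x \in s by rewrite mem_cat !mem_enum inE orbN.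
exists (index^~ s); split.
- by move=> x y; apply: index_inj.
- by move=> x; rewrite -(cardsC A) !cardE -size_cat index_mem.
apply/setP => x; rewrite inE index_cat mem_enum cardE.
by case: ifP => [xA|_]; rewrite ?index_mem ?mem_enum // ltnNge leq_addr.
Qed.

Lemma exists_mu_of_attaining (v : {set T} -> R) (A : {set T}) :
  nondecreasing_setfun v -> v set0 = 0 ->
  exists C mu, [/\ in_Sigma C, is_mu_of v C mu & mu A = v A].
Proof.
move=> v_mono v0; have [r [r_inj r_lt A_prefix]] := exists_rank_prefix A.
have [mu_meas agree] := rank_measure_is_mu_of r_inj v_mono v0.
exists (rank_chain r), (rank_measure r v); split=> //.
  exact: rank_chain_in_Sigma r_inj r_lt.
have A_lt : (#|A| < #|T|.+1)%N by rewrite ltnS max_card.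
by apply: agree; rewrite A_prefix; apply/imsetP; exists (Ordinal A_lt).
Qed.

Lemma separating_set (C : {set {set T}}) (x y : T) : generates_powerset C -> x != y ->
  exists2 D, D \in C & (x \in D) != (y \in D).
Proof.
move=> genC xy.
have [/exists_inP//|/exists_inPn no_sep] := boolP [exists D in C, (x \in D) != (y \in D)].
pose F := [set B : {set T} | (x \in B) == (y \in B)].
have F_sigma : is_sigma_algebra F.
  split=> [|B|B B']; rewrite !inE //; first by move=> /eqP->.
  by move=> /eqP-> /eqP->.
have C_F : C \subset F by apply/subsetP => D /no_sep; rewrite inE negbK.
by move: (genC F F_sigma C_F) => /setP/(_ [set x]); rewrite !inE eqxx [y == x]eq_sym (negbTE xy).
Qed.

Lemma separating_card (D : {set T}) (x y : T) :
  (x \in D) != (y \in D) -> (0 < #|D| < #|T|)%N.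
Proof.
move=> sep; apply/andP; split.
  by apply/card_gt0P; case: (boolP (x \in D)) sep => [xD|_ /negPn yD]; [exists x|exists y].
rewrite -cardsT proper_card // properT; apply: contra_neq sep => ->.
by rewrite !inE.
Qed.

Section NextV.
Variable v : {set T} -> R.
Hypotheses (v_mono : nondecreasing_setfun v) (v0 : v set0 = 0).

Lemma mu_of_le_setT C mu (A : {set T}) : in_Sigma C -> is_mu_of v C mu -> mu A <= v setT.
Proof.
by move=> [_ _ TC _] [mu_meas agree]; rewrite -(agree _ TC) le_measure ?subsetT.
Qed.

Lemma mu_of_le_next_v C mu (A : {set T}) :
  in_Sigma C -> is_mu_of v C mu -> mu A <= next_v v A.
Proof.
move=> CS mu_of; apply: ub_le_sup; last by exists C, mu.
by exists (v setT) => _ [C' [mu' [C'S mu'_of ->]]]; apply: mu_of_le_setT mu'_of.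
Qed.

Lemma next_v_le_ub (A : {set T}) (M : R) :
  (forall C mu, in_Sigma C -> is_mu_of v C mu -> mu A <= M) -> next_v v A <= M.
Proof.
move=> ub; apply: ge_sup => [|_ [C [mu [CS mu_of ->]]]]; last exact: ub CS mu_of.
by have [C [mu [CS mu_of _]]] := exists_mu_of_attaining A v_mono v0; exists (mu A), C, mu.
Qed.

Lemma le_next_v (A : {set T}) : v A <= next_v v A.
Proof.
by have [C [mu [CS mu_of <-]]] := exists_mu_of_attaining A v_mono v0; apply: mu_of_le_next_v mu_of.
Qed.

Lemma next_v_eq (A : {set T}) :
  (forall C mu, in_Sigma C -> is_mu_of v C mu -> mu A <= v A) -> next_v v A = v A.
Proof. by move=> ub; apply/le_anti; rewrite next_v_le_ub // le_next_v. Qed.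

Lemma next_v_set0 : next_v v set0 = 0.
Proof. by rewrite next_v_eq ?v0 // => C mu _ [[-> _ _] _]. Qed.

Lemma next_v_setT : next_v v setT = v setT.
Proof. by apply: next_v_eq => C mu; apply: mu_of_le_setT. Qed.

Lemma next_v_mono : nondecreasing_setfun (next_v v).
Proof.
move=> A B AB; apply: next_v_le_ub => C mu CS mu_of.
by apply: le_trans (le_measure mu_of.1 AB) (mu_of_le_next_v B CS mu_of).
Qed.

Lemma next_v_subadditive (A B : {set T}) :
  [disjoint A & B] -> next_v v (A :|: B) <= next_v v A + next_v v B.
Proof.
move=> AB; apply: next_v_le_ub => C mu CS mu_of; have [[_ _ mu_add] _] := mu_of.
by rewrite mu_add // lerD ?(mu_of_le_next_v _ CS mu_of).
Qed.

Lemma next_v_setI_le (A B : {set T}) : A :|: B = setT ->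
  next_v v (A :&: B) + v setT <= next_v v A + next_v v B.
Proof.
move=> ABT; rewrite -lerBrDr; apply: next_v_le_ub => C mu CS mu_of.
have [_ _ TC _] := CS; have [mu_meas agree] := mu_of.
have := measureUI mu_meas A B; rewrite ABT agree //.
have := mu_of_le_next_v A CS mu_of; have := mu_of_le_next_v B CS mu_of; lra.
Qed.

End NextV.

End ChainMeasures.

Section ThreePoints.
Variables (R : realType) (T : finType).
Hypothesis T3 : #|T| = 3%N.

Lemma in_Sigma_card12 (C : {set {set T}}) : in_Sigma C ->
  exists P Q, [/\ P \in C, Q \in C, P \subset Q, #|P| = 1 & #|Q| = 2]%N.
Proof.
move=> [C_chain _ _ genC].
suff [D [D' [DC D'C DD' D_card D'_card]]] : exists D D',
    [/\ D \in C, D' \in C, D != D', (0 < #|D| < 3)%N & (0 < #|D'| < 3)%N].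
  wlog DD'_sub : D D' DC D'C DD' D_card D'_card / D \subset D'.
    move=> wlog_sub; have /orP[|D'D_sub] := C_chain D D' DC D'C.
      exact: wlog_sub.
    by apply: (wlog_sub D' D) => //; rewrite eq_sym.
  have : (#|D| < #|D'|)%N by apply: proper_card; rewrite properEneq DD' DD'_sub.
  by exists D, D'; split=> //; lia.
have /card_gt2P[x [y [z [_ [xy yz zx]]]]] : (2 < #|[set: T]|)%N by rewrite cardsT T3.
have [Dxy Dxy_C sep_xy] := separating_set genC xy.
have [Dyz Dyz_C sep_yz] := separating_set genC yz.
have [Dzx Dzx_C sep_zx] := separating_set genC zx.
have card_sep (D : {set T}) (u u' : T) : (u \in D) != (u' \in D) -> (0 < #|D| < 3)%N.
  by rewrite -T3; apply: separating_card.
(* A single set cannot separate all three pairs of points. *)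
have [eq_xy_yz|ne_xy_yz] := eqVneq Dxy Dyz.
  have [eq_xy_zx|ne_xy_zx] := eqVneq Dxy Dzx.
    by move: sep_xy sep_yz sep_zx; rewrite -eq_xy_yz -eq_xy_zx;
      case: (x \in Dxy); case: (y \in Dxy); case: (z \in Dxy).
  by exists Dxy, Dzx; rewrite (card_sep _ _ _ sep_xy) (card_sep _ _ _ sep_zx).
by exists Dxy, Dyz; rewrite (card_sep _ _ _ sep_xy) (card_sep _ _ _ sep_yz).
Qed.

Lemma subset_disjoint_or_cover (A B : {set T}) :
  [\/ A \subset B, B \subset A, [disjoint A & B] | A :|: B = setT].
Proof.
have [AB|] := boolP (A \subset B); first by constructor 1.
have [BA|] := boolP (B \subset A); first by constructor 2.
have [dAB|] := boolP [disjoint A & B]; first by constructor 3.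
rewrite -setI_eq0 -card_gt0 => I_gt0; rewrite -setD_eq0 -card_gt0 => BA_gt0.
rewrite -setD_eq0 -card_gt0 => AB_gt0.
constructor 4; apply/eqP; rewrite eqEcard subsetT cardsT T3 cardsU.
have := cardsID B A; have := cardsID A B; rewrite [B :&: A]setIC; lia.
Qed.

Lemma mu_of_le_submodular (w : {set T} -> R) C mu (A : {set T}) :
  submodular w -> w set0 = 0 -> in_Sigma C -> is_mu_of w C mu -> mu A <= w A.
Proof.
move=> w_sub w0 CS [mu_meas agree]; have [_ _ TC _] := CS.
have [P [Q [PC QC PQ P1 Q2]]] := in_Sigma_card12 CS.
apply: (@measure_le_submodular_chain _ _ _ _ w_sub mu_meas A [:: P; Q; setT]) => //.
- rewrite /= /unit_step sub0set setD0 P1 PQ subsetT setTD cardsD (setIidPr PQ) P1 Q2 /=.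
  by rewrite andbT -(leq_add2l 2) -{1}Q2 cardsC T3.
- by move=> X; rewrite !inE => /or3P[] /eqP->; apply: agree.
Qed.

Lemma next_v_submodular (v : {set T} -> R) :
  nondecreasing_setfun v -> v set0 = 0 -> submodular (next_v v).
Proof.
move=> v_mono v0 A B; case: (subset_disjoint_or_cover A B) => [AB|BA|dAB|ABT].
- by rewrite (setUidPr AB) (setIidPl AB) addrC.
- by rewrite (setUidPl BA) (setIidPr BA).
- by rewrite (disjoint_setI0 dAB) next_v_set0 // addr0 next_v_subadditive.
- by have := next_v_setI_le v_mono v0 ABT; rewrite ABT next_v_setT //; lra.
Qed.

Lemma next_v_fixed_submodular (w : {set T} -> R) :
  nondecreasing_setfun w -> submodular w -> w set0 = 0 -> next_v w = w.
Proof.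
move=> w_mono w_sub w0; apply/funext => A; apply: next_v_eq => // C mu.
exact: mu_of_le_submodular.
Qed.

End ThreePoints.

Unset Implicit Arguments.
Set Strict Implicit.
Theorem corollary22 (R : realType) (T : finType) (hT : #|T| = 3%N)
    (v0 : {set T} -> R)
    (v0_ge0 : forall A, 0 <= v0 A)
    (v0_mono : nondecreasing_setfun v0)
    (v0_set0 : v0 set0 = 0) :
  (forall (n : nat) (A : {set T}), iter n.+1 (@next_v R T) v0 A = next_v v0 A)
  /\ submodular (next_v v0).
Proof.
have v1_sub := next_v_submodular hT v0_mono v0_set0.
have v1_fixed : next_v (next_v v0) = next_v v0.
  apply: next_v_fixed_submodular => //; first exact: next_v_mono.
  exact: next_v_set0.
split=> //; elim=> [//|n IH] A.
by rewrite iterS (funext IH) v1_fixed.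
Qed.
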